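(* Let $P$ and $P'$ be two temporal patterns over a temporal sequence database $\mathcal{D}_{\text{SEQ}}$ and $\delta$ a confidence threshold. If $P'\subseteq P$ and $\dfrac{\textit{supp}(P')}{\max_{1\le k\le|P|}\{\textit{supp}(E_k)\}_{E_k\in P}}\le\delta$, then $\textit{conf}(P)\le\delta$.
   Context: $\mathcal{D}_{\text{SEQ}}$ is a finite collection of temporal sequences (lists of event instances $(\omega,[t_s,t_e])$ of temporal events $E=(\omega,T)$, ordered by start time). A temporal pattern is a list of triples $(r_{ij},E_i,E_j)$ with $r_{ij}\in\{\text{Follows},\text{Contains},\text{Overlaps}\}$; $P'\subseteq P$ means $P'$ is a sub-pattern of $P$ (its triples are among those of $P$). A sequence supports a pattern iff it has at least two instances and each triple's relation holds between some instances of the two events in the sequence. $\textit{supp}(E)$ is the number of sequences containing an instance of $E$; $\textit{supp}(P)$ the number of sequences supporting $P$; $\textit{conf}(P)=\textit{supp}(P)/\max_{E_k\in P}\textit{supp}(E_k)$, the maximum over events occurring in $P$. *)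

From HB Require Import structures.
From mathcomp Require Import all_boot all_order all_algebra.
Set Implicit Arguments. Unset Strict Implicit. Unset Printing Implicit Defensive.
Import Order.TTheory GRing.Theory Num.Theory.

(* Temporal events are identified by their label omega : Omega (an eqType).
   An event instance is (omega, [ts, te]) with natural-number time stamps. *)
Record instance (Omega : eqType) := Inst { label : Omega; ts : nat; te : nat }.

Notation tseq Omega := (seq (instance Omega)).

Definition ordered_by_start (Omega : eqType) (s : tseq Omega) :=
  sorted (fun a b => ts a <= ts b) s.

Inductive trel := Follows | Contains | Overlaps.
Definition trel_eqb (x y : trel) : bool :=
  match x, y with
  | Follows, Follows | Contains, Contains | Overlaps, Overlaps => true
  | _, _ => false end.
Lemma trel_eqP : Equality.axiom trel_eqb.
Proof. by case; case; constructor. Qed.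
HB.instance Definition _ := hasDecEq.Build trel trel_eqP.

Definition rel_holds (Omega : eqType) (r : trel) (a b : instance Omega) : bool :=
  match r with
  | Follows  => te a <= ts b
  | Contains => (ts a <= ts b) && (te b <= te a)
  | Overlaps => [&& ts a < ts b, ts b < te a & te a < te b]
  end.

Notation pattern Omega := (seq (trel * Omega * Omega)).

Definition subpattern (Omega : eqType) (P' P : pattern Omega) : Prop :=
  {subset P' <= P}.

Definition events (Omega : eqType) (P : pattern Omega) : seq Omega :=
  flatten [seq [:: t.1.2; t.2] | t <- P].

Definition triple_holds (Omega : eqType) (s : tseq Omega) (t : trel * Omega * Omega) : bool :=
  has (fun a => (label a == t.1.2) &&
        has (fun b => (label b == t.2) && rel_holds t.1.1 a b) s) s.

Definition supports (Omega : eqType) (s : tseq Omega) (P : pattern Omega) : bool :=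
  (2 <= size s) && all (triple_holds s) P.

Definition contains_event (Omega : eqType) (s : tseq Omega) (E : Omega) : bool :=
  has (fun a => label a == E) s.

Notation database Omega := (seq (tseq Omega)).

Definition supp_ev (Omega : eqType) (D : database Omega) (E : Omega) : nat :=
  count (fun s => contains_event s E) D.

Definition supp_pat (Omega : eqType) (D : database Omega) (P : pattern Omega) : nat :=
  count (fun s => supports s P) D.

Definition max_ev_supp (Omega : eqType) (D : database Omega) (P : pattern Omega) : nat :=
  \max_(E <- events P) supp_ev D E.

(* conf(P) = supp(P) / max_{E_k in P} supp(E_k), in rat (x / 0 = 0). *)
Definition conf (Omega : eqType) (D : database Omega) (P : pattern Omega) : rat :=
  ((supp_pat D P)%:R / (max_ev_supp D P)%:R)%R.

From mathcomp Require Import all_boot all_order all_algebra.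
Import Order.TTheory GRing.Theory Num.Theory.
Local Open Scope ring_scope.

(* Support is anti-monotone in the pattern, while conf(P) and the ratio in the
   hypothesis share the denominator max_ev_supp D P. *)

Lemma supports_subpattern (Omega : eqType) (s : tseq Omega) (P P' : pattern Omega) :
  subpattern P' P -> supports s P -> supports s P'.
Proof.
move=> subP'P /andP[size_s /allP holdsP].
by rewrite /supports size_s; apply/allP => t /subP'P /holdsP.
Qed.

Lemma supp_pat_subpattern (Omega : eqType) (D : database Omega) (P P' : pattern Omega) :
  subpattern P' P -> (supp_pat D P <= supp_pat D P')%N.
Proof. by move=> subP'P; apply: sub_count => s; apply: supports_subpattern. Qed.

Theorem lemma7 (Omega : eqType) (D : database Omega)
  (HD : all (@ordered_by_start Omega) D)
  (P P' : pattern Omega) (delta : rat) :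
  subpattern P' P ->
  (supp_pat D P')%:R / (max_ev_supp D P)%:R <= delta ->
  conf D P <= delta.
Proof.
move=> subP'P; apply: le_trans.
rewrite /conf ler_wpM2r ?invr_ge0 ?ler0n // ler_nat.
exact: supp_pat_subpattern.
Qed.
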